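(* Let $M=\begin{pmatrix}a&b\\c&d\end{pmatrix}$ be a random real $2\times2$ matrix whose rows are exchangeable, i.e. $(a,b,c,d)\overset{d}{=}(c,d,a,b)$. Then $\Pr(M\text{ has both eigenvalues real})\ge\frac12$. *)

From HB Require Import structures.
From mathcomp Require Import all_boot all_order all_algebra.
From mathcomp Require Import all_classical all_reals all_analysis.
Set Implicit Arguments. Unset Strict Implicit. Unset Printing Implicit Defensive.
Import Order.TTheory GRing.Theory Num.Theory.
Local Open Scope ring_scope.

Definition entries4 (R : Type) (M : 'M[R]_2) : R * R * R * R :=
  (M 0 0, M 0 1, M 1 0, M 1 1).

(* M has both eigenvalues real: its characteristic polynomial splits
   into real linear factors, i.e. both (complex) eigenvalues, counted with
   multiplicity, are real numbers l1, l2. *)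
Definition both_eigenvalues_real (R : realType) (M : 'M[R]_2) : Prop :=
  exists l1 l2 : R, char_poly M = ('X - l1%:P) * ('X - l2%:P).

(* A real 2x2 matrix M = [[a, b], [c, d]] has real eigenvalues exactly when
   the discriminant (a - d)^2 + 4bc of its characteristic polynomial is
   nonnegative. Swapping the rows gives the discriminant (c - b)^2 + 4da, and
   the two discriminants add up to (a + d)^2 + (b + c)^2 >= 0. Hence every
   matrix or its row swap has real eigenvalues: the two events cover the
   sample space, and by exchangeability they have the same probability, which
   is therefore at least 1/2. *)

From HB Require Import structures.
From mathcomp Require Import all_boot all_order all_algebra.
From mathcomp Require Import all_classical all_reals all_analysis.
From mathcomp Require Import perm measurable_realfun.
From mathcomp Require Import ring lra.

Set Implicit Arguments.
Unset Strict Implicit.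
Unset Printing Implicit Defensive.

Import Order.TTheory GRing.Theory Num.Theory.
Local Open Scope classical_set_scope.
Local Open Scope ring_scope.

Lemma monic_deg2_splitsP (R : rcfType) (p : {poly R}) :
  size p = 3 -> p \is monic ->
  (exists l1 l2 : R, p = ('X - l1%:P) * ('X - l2%:P)) <->
  0 <= p`_1 ^+ 2 - 4 * p`_0.
Proof.
move=> p3 mon_p; split=> [[l1 [l2 pE]] | ].
  rewrite leNgt; apply/negP.
  move=> /(Pdeg2.RealMonic.deg2_poly_noroot p3 mon_p)/(_ l1).
  by rewrite pE rootM root_XsubC eqxx.
move=> /(Pdeg2.RealMonic.deg2_poly_factor p3 mon_p) pE.
by exists ((- p`_1 - Num.sqrt (p`_1 ^+ 2 - 4 * p`_0)) / 2),
          ((- p`_1 + Num.sqrt (p`_1 ^+ 2 - 4 * p`_0)) / 2).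
Qed.

Lemma mxtrace22 (R : nzRingType) (A : 'M[R]_2) : \tr A = A 0 0 + A 1 1.
Proof.
by rewrite /mxtrace big_ord_recl big_ord1 (_ : lift 0 0 = 1) //; exact/val_inj.
Qed.

Lemma det_mx22 (R : comNzRingType) (A : 'M[R]_2) :
  \det A = A 0 0 * A 1 1 - A 0 1 * A 1 0.
Proof.
rewrite (expand_det_row A 0) big_ord_recl big_ord1 /cofactor !det_mx11 !mxE /=.
have -> : lift 0 0 = 1 :> 'I_2 by apply/val_inj.
have -> : lift 1 0 = 0 :> 'I_2 by apply/val_inj.
by rewrite expr0 expr1 mul1r; ring.
Qed.

Definition disc4 (R : nzRingType) (t : R * R * R * R) : R :=
  (t.1.1.1 - t.2) ^+ 2 + 4 * t.1.1.2 * t.1.2.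

Lemma char_poly_mx22_splitsP (R : rcfType) (M : 'M[R]_2) :
  (exists l1 l2 : R, char_poly M = ('X - l1%:P) * ('X - l2%:P)) <->
  0 <= disc4 (entries4 M).
Proof.
rewrite monic_deg2_splitsP ?size_char_poly ?char_poly_monic //.
rewrite (char_poly_trace M isT) char_poly_det.
suff -> : (- \tr M) ^+ 2 - 4 * ((-1) ^+ 2 * \det M) = disc4 (entries4 M) by [].
by rewrite mxtrace22 det_mx22 /disc4 /=; ring.
Qed.

Lemma disc4_add_xrow (R : comNzRingType) (M : 'M[R]_2) :
  disc4 (entries4 M) + disc4 (entries4 (xrow 0 1 M)) =
  (M 0 0 + M 1 1) ^+ 2 + (M 0 1 + M 1 0) ^+ 2.
Proof. by rewrite /disc4 /entries4 /= !mxE tpermL tpermR; ring. Qed.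

Lemma disc4_ge0_or_xrow (R : realDomainType) (M : 'M[R]_2) :
  0 <= disc4 (entries4 M) \/ 0 <= disc4 (entries4 (xrow 0 1 M)).
Proof.
have := disc4_add_xrow M; have := sqr_ge0 (M 0 0 + M 1 1).
have := sqr_ge0 (M 0 1 + M 1 0).
case: (lerP 0 (disc4 (entries4 M))) => [|DM]; first by left.
by right; lra.
Qed.

Lemma measurable_disc4_ge0 (R : realType) :
  measurable [set t : R * R * R * R | 0 <= disc4 t].
Proof.
have mdisc : measurable_fun setT (@disc4 R).
  apply: measurable_funD.
    apply: measurable_funX; apply: measurable_funB;
    by do ![exact: measurable_fst | exact: measurable_snd
           | apply: measurableT_comp].
  by do ![apply: measurable_funM | exact: measurable_cst
         | exact: measurable_fst | exact: measurable_snd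
         | apply: measurableT_comp].
have := mdisc measurableT _ (measurable_itv `[(0 : R), +oo[).
rewrite setTI; congr measurable; apply/seteqP.
by split=> t /=; rewrite in_itv /= andbT.
Qed.

Lemma measurable_entries4 d (T : measurableType d) (R : realType)
    (X : T -> 'M[R]_2) :
  (forall i j : 'I_2, measurable_fun setT (fun w => X w i j)) ->
  measurable_fun setT (fun w => entries4 (X w)).
Proof. by move=> mX; do 3!apply: measurable_fun_pair => //. Qed.

Lemma probability_ge_half_of_cover d (T : measurableType d) (R : realType)
    (P : probability T R) (E F : set T) :
  measurable E -> measurable F -> E `|` F = setT -> P E = P F ->
  ((1 / 2 : R)%:E <= P E)%E.
Proof.
move=> mE mF EF PEF.
have : (1 <= P E + P E)%E.
  by rewrite -(probability_setT P) -EF {2}PEF; exact: measureU2.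
case: (P E) => [r| |] //=; last by move=> _; exact: leey.
by rewrite -EFinD !lee_fin => r_ge; lra.
Qed.

Theorem mainTheorem19 (d : measure_display) (T : measurableType d)
  (R : realType) (P : probability T R) (X : T -> 'M[R]_2)
  (hX : forall i j : 'I_2, measurable_fun setT (fun w => X w i j))
  (hexch : forall A : set (R * R * R * R), measurable A ->
     P ((fun w => entries4 (X w)) @^-1` A) =
     P ((fun w => entries4 (xrow 0 1 (X w))) @^-1` A)) :
  ((1 / 2 : R)%:E <= P [set w | both_eigenvalues_real (X w)])%E.
Proof.
set D := [set t : R * R * R * R | 0 <= disc4 t].
have mD : measurable D := @measurable_disc4_ge0 R.
have hXswap (i j : 'I_2) : measurable_fun setT (fun w => xrow 0 1 (X w) i j).
  by under eq_fun do rewrite !mxE; exact: hX.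
have mE := measurable_entries4 hX measurableT mD; rewrite setTI in mE.
have mF := measurable_entries4 hXswap measurableT mD; rewrite setTI in mF.
have -> : [set w | both_eigenvalues_real (X w)] =
          (fun w => entries4 (X w)) @^-1` D.
  apply/seteqP; split=> w /=; rewrite /both_eigenvalues_real;
  by move=> /char_poly_mx22_splitsP.
apply: (probability_ge_half_of_cover mE mF _ (hexch _ mD)).
by apply/seteqP; split=> // w _; exact: disc4_ge0_or_xrow.
Qed.
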